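(* Let $\omega$ be a primitive third root of unity and $\mathcal{C}=\mathbb{C}\langle x,y,z\rangle/(x^2,y^2,z^2,\ zxy+\omega xyz+\omega^2 yzx,\ zxy+\omega^2 xyz+\omega yzx)$. Then the element $g_0=zxy+xyz+yzx$ of $\mathcal{C}$ satisfies $g_0x=xg_0=g_0y=yg_0=g_0z=zg_0=0$. *)

From HB Require Import structures.
From mathcomp Require Import all_boot all_order all_algebra.
From mathcomp Require Import complex.
From mathcomp Require Import Rstruct.
From Stdlib Require Import Rdefinitions.
Set Implicit Arguments. Unset Strict Implicit. Unset Printing Implicit Defensive.
Import Order.TTheory GRing.Theory Num.Theory.
Local Open Scope ring_scope.

Notation CC := (complex Rdefinitions.R).

(* Letters: 0 = x, 1 = y, 2 = z.  Words are sequences of letters. *)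
Definition word := seq 'I_3.

(* A noncommutative polynomial, written as a finite formal sum of
   (coefficient, word) terms. *)
Definition ncpoly := seq (CC * word).

(* Coefficient of a word in a formal sum: this defines the element of the
   free algebra C<x,y,z> that the formal sum denotes. *)
Definition nccoef (p : ncpoly) (w : word) : CC :=
  \sum_(t <- p | t.2 == w) t.1.

Definition nceq (p q : ncpoly) : Prop := forall w, nccoef p w = nccoef q w.

Definition ncadd (p q : ncpoly) : ncpoly := p ++ q.
Definition ncmul (p q : ncpoly) : ncpoly :=
  [seq (a.1 * b.1, a.2 ++ b.2) | a <- p, b <- q].
Definition ncscale (c : CC) (p : ncpoly) : ncpoly := [seq (c * a.1, a.2) | a <- p].

Definition ncX : ncpoly := [:: (1, [:: (0 : 'I_3)])].
Definition ncY : ncpoly := [:: (1, [:: (1 : 'I_3)])].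
Definition ncZ : ncpoly := [:: (1, [:: (2 : 'I_3)])].

Definition in_ideal (rels : seq ncpoly) (p : ncpoly) : Prop :=
  exists l : seq (ncpoly * nat * ncpoly),
    nceq p (flatten [seq ncmul (ncmul t.1.1 (nth [::] rels t.1.2)) t.2 | t <- l]).

Definition zero_in_quot (rels : seq ncpoly) (p : ncpoly) : Prop := in_ideal rels p.

Definition rels_C (w : CC) : seq ncpoly :=
  [:: ncmul ncX ncX; ncmul ncY ncY; ncmul ncZ ncZ;
      ncadd (ncmul ncZ (ncmul ncX ncY))
        (ncadd (ncscale w (ncmul ncX (ncmul ncY ncZ)))
               (ncscale (w ^+ 2) (ncmul ncY (ncmul ncZ ncX))));
      ncadd (ncmul ncZ (ncmul ncX ncY))
        (ncadd (ncscale (w ^+ 2) (ncmul ncX (ncmul ncY ncZ)))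
               (ncscale w (ncmul ncY (ncmul ncZ ncX))))].

Definition g0 : ncpoly :=
  ncadd (ncmul ncZ (ncmul ncX ncY))
    (ncadd (ncmul ncX (ncmul ncY ncZ)) (ncmul ncY (ncmul ncZ ncX))).

(* Since 1 + w + w^2 = 0, the two cubic relations r, r' and g0 = zxy + xyz + yzx
   are related to the cyclic monomials by a Vandermonde system in 1, w, w^2:
   g0 + r + r' = 3 zxy,  g0 + w^2 r + w r' = 3 xyz,  g0 + w r + w^2 r' = 3 yzx.
   So g0 is congruent to three times each cyclic monomial, and multiplying by a
   letter on the suitable side creates a square: g0 x = 3 yz.x^2 and
   x g0 = 3 x^2.yz modulo the ideal, and similarly for y and z. *)

From mathcomp Require Import all_boot all_order all_algebra.
From mathcomp Require Import complex Rstruct.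
From mathcomp Require Import ring.
Import GRing.Theory.
Local Open Scope ring_scope.

Lemma nccoef_cat p q u : nccoef (ncadd p q) u = nccoef p u + nccoef q u.
Proof. by rewrite /nccoef big_cat. Qed.

Lemma nccoef_scale c p u : nccoef (ncscale c p) u = c * nccoef p u.
Proof. by rewrite /nccoef big_map mulr_sumr. Qed.

Lemma nccoef_flatten ps u : nccoef (flatten ps) u = \sum_(p <- ps) nccoef p u.
Proof. by rewrite /nccoef big_flatten. Qed.

Lemma sum_split_word (c : CC) (s t u : word) :
  \sum_(i < (size u).+1) (if (s == take i u) && (t == drop i u) then c else 0)
  = if s ++ t == u then c else 0.
Proof.
case: eqP => [<- | neq_u].
- have ltn_s : (size s < (size (s ++ t)).+1)%N by rewrite size_cat ltnS leq_addr.
  rewrite (bigD1 (Ordinal ltn_s)) //= take_size_cat // drop_size_cat // !eqxx.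
  rewrite big1 ?addr0 // => i neq_i; case: ifP => // /andP[/eqP s_take _].
  case/eqP: neq_i; apply/val_inj => /=.
  by move/(congr1 size): s_take; rewrite size_takel // -ltnS.
- rewrite big1 // => i _; case: ifP => // /andP[/eqP s_take /eqP t_drop].
  by case: neq_u; rewrite s_take t_drop cat_take_drop.
Qed.

Lemma nccoef_mul p q u :
  nccoef (ncmul p q) u =
  \sum_(i < (size u).+1) nccoef p (take i u) * nccoef q (drop i u).
Proof.
rewrite /nccoef big_mkcond /ncmul big_allpairs_dep /=.
under [RHS]eq_bigr do rewrite (big_mkcond (fun a => a.2 == _))
  (big_mkcond (fun b => b.2 == _)) big_distrlr /=.
rewrite [RHS]exchange_big; apply: eq_bigr => a _ /=.
rewrite [RHS]exchange_big; apply: eq_bigr => b _ /=.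
rewrite -sum_split_word; apply: eq_bigr => i _.
by case: (a.2 == _); case: (b.2 == _); rewrite ?mulr0 ?mul0r.
Qed.

Lemma ncmul_catl p q r : ncmul (p ++ q) r = ncmul p r ++ ncmul q r.
Proof. exact: allpairs_cat. Qed.

Lemma ncmul_cons a p q :
  ncmul (a :: p) q = [seq (a.1 * b.1, a.2 ++ b.2) | b <- q] ++ ncmul p q.
Proof. by []. Qed.

Lemma ncmulA p q r : ncmul p (ncmul q r) = ncmul (ncmul p q) r.
Proof.
elim: p => // a p IH; rewrite !ncmul_cons ncmul_catl {}IH; congr (_ ++ _).
elim: q => // b q IH; rewrite ncmul_cons map_cat IH /= ncmul_cons.
by congr (_ ++ _); rewrite -map_comp; apply: eq_map => c /=; rewrite mulrA catA.
Qed.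

Lemma nceq_mul {p p' q q'} : nceq p p' -> nceq q q' -> nceq (ncmul p q) (ncmul p' q').
Proof. by move=> eq_p eq_q u; rewrite !nccoef_mul; under eq_bigr do rewrite eq_p eq_q. Qed.

Lemma nccoef_mulDl p q r u :
  nccoef (ncmul (ncadd p q) r) u = nccoef (ncmul p r) u + nccoef (ncmul q r) u.
Proof. by rewrite /ncadd ncmul_catl nccoef_cat. Qed.

Lemma nccoef_mulDr p q r u :
  nccoef (ncmul p (ncadd q r)) u = nccoef (ncmul p q) u + nccoef (ncmul p r) u.
Proof.
by rewrite !nccoef_mul -big_split; apply: eq_bigr => i _; rewrite nccoef_cat mulrDr.
Qed.

Lemma nccoef_mulZl c p q u :
  nccoef (ncmul (ncscale c p) q) u = c * nccoef (ncmul p q) u.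
Proof.
by rewrite !nccoef_mul mulr_sumr; apply: eq_bigr => i _; rewrite nccoef_scale mulrA.
Qed.

Lemma nccoef_mulZr c p q u :
  nccoef (ncmul p (ncscale c q)) u = c * nccoef (ncmul p q) u.
Proof.
rewrite !nccoef_mul mulr_sumr; apply: eq_bigr => i _.
by rewrite nccoef_scale mulrCA.
Qed.

Lemma nccoef_mul_flattenl ps q u :
  nccoef (ncmul (flatten ps) q) u = \sum_(p <- ps) nccoef (ncmul p q) u.
Proof.
rewrite nccoef_mul; under eq_bigr do rewrite nccoef_flatten mulr_suml.
by rewrite exchange_big; apply: eq_bigr => p _; rewrite nccoef_mul.
Qed.

Lemma nccoef_mul_flattenr p qs u :
  nccoef (ncmul p (flatten qs)) u = \sum_(q <- qs) nccoef (ncmul p q) u.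
Proof.
rewrite nccoef_mul; under eq_bigr do rewrite nccoef_flatten mulr_sumr.
by rewrite exchange_big; apply: eq_bigr => q _; rewrite nccoef_mul.
Qed.

Definition ncone : ncpoly := [:: (1, [::])].

Definition ncsub (p q : ncpoly) : ncpoly := ncadd p (ncscale (-1) q).

Lemma ncmul1p p : ncmul ncone p = p.
Proof. by rewrite /ncmul /= cats0 -[RHS]map_id; apply: eq_map => -[c u] /=; rewrite mul1r. Qed.

Lemma ncmulp1 p : ncmul p ncone = p.
Proof. by elim: p => //= -[c u] p IH; rewrite ncmul_cons IH /= mulr1 cats0. Qed.

Section Ideal.

Context {rels : seq ncpoly}.

Local Notation ideal := (in_ideal rels).

Lemma in_ideal_nceq {p q} : nceq p q -> ideal q -> ideal p.
Proof. by move=> eq_pq [l eq_q]; exists l => u; rewrite eq_pq eq_q. Qed.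

Lemma in_idealD {p q} : ideal p -> ideal q -> ideal (ncadd p q).
Proof.
move=> [l1 eq_p] [l2 eq_q]; exists (l1 ++ l2) => u.
by rewrite map_cat flatten_cat !nccoef_cat eq_p eq_q.
Qed.

Lemma in_idealZ c {p} : ideal p -> ideal (ncscale c p).
Proof.
move=> [l eq_p]; exists [seq (ncscale c t.1.1, t.1.2, t.2) | t <- l] => u.
rewrite nccoef_scale eq_p !nccoef_flatten -map_comp !big_map mulr_sumr.
by apply: eq_bigr => t _ /=; rewrite -!ncmulA nccoef_mulZl.
Qed.

Lemma in_idealMl a {p} : ideal p -> ideal (ncmul a p).
Proof.
move=> [l eq_p]; exists [seq (ncmul a t.1.1, t.1.2, t.2) | t <- l] => u.
rewrite (nceq_mul (fun=> erefl) eq_p) nccoef_mul_flattenr nccoef_flatten.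
by rewrite -map_comp !big_map; apply: eq_bigr => t _ /=; rewrite !ncmulA.
Qed.

Lemma in_idealMr {p} b : ideal p -> ideal (ncmul p b).
Proof.
move=> [l eq_p]; exists [seq (t.1.1, t.1.2, ncmul t.2 b) | t <- l] => u.
rewrite (nceq_mul eq_p (fun=> erefl)) nccoef_mul_flattenl nccoef_flatten.
by rewrite -map_comp !big_map; apply: eq_bigr => t _ /=; rewrite !ncmulA.
Qed.

Lemma in_ideal_nth k : ideal (nth [::] rels k).
Proof. by exists [:: (ncone, k, ncone)] => u; rewrite /= cats0 ncmul1p ncmulp1. Qed.

Lemma in_idealZMl c {p q} : ideal (ncmul p q) -> ideal (ncmul (ncscale c p) q).
Proof. by move/(in_idealZ c); apply: in_ideal_nceq => u; rewrite nccoef_mulZl nccoef_scale. Qed.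

Lemma in_idealZMr c {p q} : ideal (ncmul p q) -> ideal (ncmul p (ncscale c q)).
Proof. by move/(in_idealZ c); apply: in_ideal_nceq => u; rewrite nccoef_mulZr nccoef_scale. Qed.

Lemma in_ideal_subMr {p q b} : ideal (ncsub p q) -> ideal (ncmul q b) -> ideal (ncmul p b).
Proof.
move=> ideal_pq ideal_qb.
apply: (in_ideal_nceq _ (in_idealD (in_idealMr b ideal_pq) ideal_qb)) => u.
by rewrite nccoef_cat nccoef_mulDl nccoef_mulZl mulN1r addrNK.
Qed.

Lemma in_ideal_subMl {a p q} : ideal (ncsub p q) -> ideal (ncmul a q) -> ideal (ncmul a p).
Proof.
move=> ideal_pq ideal_aq.
apply: (in_ideal_nceq _ (in_idealD (in_idealMl a ideal_pq) ideal_aq)) => u.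
by rewrite nccoef_cat nccoef_mulDr nccoef_mulZr mulN1r addrNK.
Qed.

End Ideal.

Lemma primitive_root3_cyclotomic {w : CC} : 3.-primitive_root w -> w ^+ 2 + w + 1 = 0.
Proof.
move=> prim_w; have w3 : w ^+ 3 = 1 := prim_expr_order prim_w.
have w_neq1 : w != 1 by rewrite -[w]expr1 -(prim_order_dvd prim_w 1).
have : (w - 1) * (w ^+ 2 + w + 1) = 0.
  by rewrite -[RHS](subrr 1) -[X in _ = X - 1]w3; ring.
by move/eqP; rewrite mulf_eq0 subr_eq0 (negbTE w_neq1) => /eqP.
Qed.

Local Notation zxy := (ncmul ncZ (ncmul ncX ncY)).
Local Notation xyz := (ncmul ncX (ncmul ncY ncZ)).
Local Notation yzx := (ncmul ncY (ncmul ncZ ncX)).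

Section Cyclotomic.

Context {w : CC} (w_cyclo : w ^+ 2 + w + 1 = 0).

Local Notation ideal := (in_ideal (rels_C w)).

Lemma eq_mod_cyclotomic (x y k : CC) : x - y = (w ^+ 2 + w + 1) * k -> x = y.
Proof. by rewrite w_cyclo mul0r => /subr0_eq. Qed.

Lemma g0_equiv_zxy : ideal (ncsub g0 (ncscale 3 zxy)).
Proof.
apply: (in_ideal_nceq _ (in_idealZ (-1)
  (in_idealD (in_ideal_nth 3) (in_ideal_nth 4)))) => u.
rewrite !(nccoef_scale, nccoef_cat).
by apply: (eq_mod_cyclotomic _ _ (nccoef xyz u + nccoef yzx u)); ring.
Qed.

Lemma g0_equiv_xyz : ideal (ncsub g0 (ncscale 3 xyz)).
Proof.
apply: (in_ideal_nceq _ (in_idealZ (-1)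
  (in_idealD (in_idealZ (w ^+ 2) (in_ideal_nth 3)) (in_idealZ w (in_ideal_nth 4))))) => u.
rewrite !(nccoef_scale, nccoef_cat).
apply: (eq_mod_cyclotomic
  _ _ (nccoef zxy u + 2 * (w - 1) * nccoef xyz u + (w ^+ 2 - w + 1) * nccoef yzx u)).
by ring.
Qed.

Lemma g0_equiv_yzx : ideal (ncsub g0 (ncscale 3 yzx)).
Proof.
apply: (in_ideal_nceq _ (in_idealZ (-1)
  (in_idealD (in_idealZ w (in_ideal_nth 3)) (in_idealZ (w ^+ 2) (in_ideal_nth 4))))) => u.
rewrite !(nccoef_scale, nccoef_cat).
apply: (eq_mod_cyclotomic
  _ _ (nccoef zxy u + (w ^+ 2 - w + 1) * nccoef xyz u + 2 * (w - 1) * nccoef yzx u)).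
by ring.
Qed.

End Cyclotomic.

Theorem mainTheorem19 (w : CC) (hw : 3.-primitive_root w) :
  let I := rels_C w in
  zero_in_quot I (ncmul g0 ncX) /\ zero_in_quot I (ncmul ncX g0) /\
  zero_in_quot I (ncmul g0 ncY) /\ zero_in_quot I (ncmul ncY g0) /\
  zero_in_quot I (ncmul g0 ncZ) /\ zero_in_quot I (ncmul ncZ g0).
Proof.
have w_cyclo := primitive_root3_cyclotomic hw.
have x2 : in_ideal (rels_C w) (ncmul ncX ncX) := in_ideal_nth 0.
have y2 : in_ideal (rels_C w) (ncmul ncY ncY) := in_ideal_nth 1.
have z2 : in_ideal (rels_C w) (ncmul ncZ ncZ) := in_ideal_nth 2.
split; [|split; [|split; [|split; [|split]]]].
- apply: (in_ideal_subMr (g0_equiv_yzx w_cyclo)); apply: in_idealZMl.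
  by rewrite -!ncmulA; apply/in_idealMl/in_idealMl.
- apply: (in_ideal_subMl (g0_equiv_xyz w_cyclo)); apply: in_idealZMr.
  by rewrite !ncmulA; apply/in_idealMr/in_idealMr.
- apply: (in_ideal_subMr (g0_equiv_zxy w_cyclo)); apply: in_idealZMl.
  by rewrite -!ncmulA; apply/in_idealMl/in_idealMl.
- apply: (in_ideal_subMl (g0_equiv_yzx w_cyclo)); apply: in_idealZMr.
  by rewrite !ncmulA; apply/in_idealMr/in_idealMr.
- apply: (in_ideal_subMr (g0_equiv_xyz w_cyclo)); apply: in_idealZMl.
  by rewrite -!ncmulA; apply/in_idealMl/in_idealMl.
- apply: (in_ideal_subMl (g0_equiv_zxy w_cyclo)); apply: in_idealZMr.
  by rewrite !ncmulA; apply/in_idealMr/in_idealMr.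
Qed.
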